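(* Let $\Phi$ be a collection of repulsive potentials on $\mathbb{X}$, let $U\subset\mathbb{C}$ be bounded, and let $\Lambda\subset\mathbb{X}$ be bounded and measurable. Then the family of functions $\{U\to\mathbb{C},\ \lambda\mapsto Z_{\Lambda,\phi}(\lambda)\ :\ \phi\in\Phi\}$ is uniformly equicontinuous. Moreover, if $\Phi$ is closed under modification and is $\delta$-zero-free on $\Lambda$ at some activity $\lambda_0\in\mathbb{C}$ for some $\delta>0$, then there is a complex neighborhood $W$ of $\lambda_0$ such that the family $\{W\to\mathbb{C},\ \lambda\mapsto\kappa_{\Lambda,\phi,\lambda}(x)\ :\ \phi\in\Phi,\ x\in\Lambda\}$ is well defined and uniformly equicontinuous.
   Context: $(\mathbb{X},d)$ is a complete separable metric space with a locally finite Borel measure $\nu$. A potential $\phi=(\phi_k)_{k\in\mathbb{N}}$ is a family of measurable $\phi_k:\mathbb{X}^k\to\mathbb{R}\cup\{\infty\}$, written $\phi(\mathbf{x})=\phi_k(\mathbf{x})$ for $\mathbf{x}\in\mathbb{X}^k$; repulsive means $\phi_k\ge0$ for all $k$; potentials are assumed symmetric (invariant under permutations of coordinates). For $\mathbf{x}\in\mathbb{X}^k$, $S\subseteq[k]$, $\mathbf{x}_S=(x_i)_{i\in S}$; $H(\mathbf{x})=\sum_{\emptyset\ne S\subseteq[k]}\phi(\mathbf{x}_S)$; $Z_{\Lambda,\phi}(\lambda)=\sum_{k\ge0}\frac{\lambda^k}{k!}\int_{\Lambda^k}e^{-H(\mathbf{x})}\nu^k(d\mathbf{x})$. Pinning: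 for $\mathbf{x}\in\mathbb{X}^k$, $\phi(\cdot\mid\mathbf{x})$ is the potential $\phi(\mathbf{y}\mid\mathbf{x})=\sum_{S\subseteq[k]}\phi(\mathbf{y},\mathbf{x}_S)$ for $\mathbf{y}\in\mathbb{X}^m$ (concatenated tuples; $S=\emptyset$ gives $\phi(\mathbf{y})$); $Z_{\Lambda,\phi}(\lambda\mid\mathbf{x})$ is the partition function of $\phi(\cdot\mid\mathbf{x})$. Modified $k$-point density: if $Z_{\Lambda,\phi}(\lambda)\ne0$, $\kappa_{\Lambda,\phi,\lambda}(\mathbf{x})=\lambda^k Z_{\Lambda,\phi}(\lambda\mid\mathbf{x})/Z_{\Lambda,\phi}(\lambda)$. Fix $z\in\mathbb{X}$ and set $D(\mathbf{x})=\sum_j d(z,x_j)$. For $y\in\mathbb{X}$, $t\in[0,\infty]$: $\phi(\mathbf{x}\mid y_{\prec t})=\phi(\mathbf{x}\mid y)$ if $D(\mathbf{x})<t$ and $=\phi(\mathbf{x})$ otherwise. $\Phi$ is $\delta$-zero-free on $\Lambda$ at $\lambda$ if $|Z_{\Lambda,\phi}(\lambda)|\ge\delta$ for all $\phi\in\Phi$. $\Phi$ is closed under modification if (1) for all $\phi\in\Phi$, $y\in\mathbb{X}$, $t\in[0,\infty]$, $\phi(\cdot\mid y_{\prec t})\in\Phi$, and (2) for all $\phi\in\Phi$ and measurable $\Delta\subseteq\mathbb{X}$, the potential $\psi$ with $\psi_k=\phi_k$ for $k\ge2$ and $\psi_1=\infty$ on $\Delta$, $\psi_1=\phi_1$ off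 $\Delta$, lies in $\Phi$. *)

From HB Require Import structures.
From mathcomp Require Import all_boot all_order all_algebra.
From mathcomp Require Import all_classical all_reals all_analysis measurable_realfun.
From mathcomp Require Import fingroup perm complex.

Set Implicit Arguments.
Unset Strict Implicit.
Unset Printing Implicit Defensive.

Import Order.TTheory GRing.Theory Num.Theory numFieldNormedType.Exports.
Local Open Scope classical_set_scope.
Local Open Scope ring_scope.

Section Defs.
Context {R : realType} {d : measure_display} {X : measurableType d}.

Definition mball (dist : X -> X -> R) (x : X) (r : R) : set X :=
  [set y | dist x y < r].

Definition mopen (dist : X -> X -> R) (A : set X) : Prop :=
  forall x, A x -> exists2 r : R, 0 < r & mball dist x r `<=` A.

Definition polish_borel (dist : X -> X -> R) : Prop :=
  [/\ (forall x y, dist x y = 0 <-> x = y) /\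
      (forall x y, dist x y = dist y x) /\
      (forall x y z, dist x z <= dist x y + dist y z),
      (forall u : nat -> X,
          (forall e : R, 0 < e -> exists N : nat, forall m n : nat,
               (N <= m)%N -> (N <= n)%N -> dist (u m) (u n) < e) ->
          exists x : X, forall e : R, 0 < e -> exists N : nat, forall n : nat,
               (N <= n)%N -> dist (u n) x < e),
      (exists q : nat -> X, forall (x : X) (e : R), 0 < e ->
          exists n : nat, dist x (q n) < e) &
      (@measurable d X = <<s [set A | mopen dist A] >>)].

Definition mbounded (dist : X -> X -> R) (A : set X) : Prop :=
  exists (x : X) (r : R), A `<=` mball dist x r.

Definition locally_finite (dist : X -> X -> R)
  (nu : {measure set X -> \bar R}) : Prop :=
  forall B : set X, measurable B -> mbounded dist B -> (nu B < +oo)%E.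

(* A potential is a family (phi_k)_k ; we represent it as a single function
   on finite sequences: phi_k is phi restricted to sequences of size k. *)
Definition potential := seq X -> \bar R.

Definition tuple_measurable (k : nat) : set (set (k.-tuple X)) :=
  <<s [set C | exists (i : 'I_k) (A : set X),
                 measurable A /\ C = [set x : k.-tuple X | A (tnth x i)]] >>.

Definition measurable_potential (phi : potential) : Prop :=
  forall (k : nat) (B : set (\bar R)), measurable B ->
    tuple_measurable (k:=k) [set x : k.-tuple X | B (phi (tval x))].

Definition symmetric_potential (phi : potential) : Prop :=
  forall (k : nat) (x : k.-tuple X) (s : 'S_k),
    phi (tval [tuple tnth x (s i) | i < k]) = phi (tval x).

Definition is_potential (phi : potential) : Prop :=
  [/\ forall x, phi x != -oo%E, measurable_potential phi &
      symmetric_potential phi].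

Definition repulsive (phi : potential) : Prop := forall x, (0 <= phi x)%E.

(* x_S for S a subset of [k], k = size x, entries kept in index order *)
Definition subseq_of (x : seq X) (S : {set 'I_(size x)}) : seq X :=
  mask [seq i \in S | i <- enum 'I_(size x)] x.

Definition energy (phi : potential) (x : seq X) : \bar R :=
  (\sum_(S : {set 'I_(size x)} | S != finset.set0) phi (subseq_of S))%E.

Definition pin (phi : potential) (x : seq X) : potential :=
  fun y => (\sum_(S : {set 'I_(size x)}) phi (y ++ subseq_of S))%E.

(* iterated integral over Lambda^k (with respect to nu^k) *)
Fixpoint iint (nu : {measure set X -> \bar R}) (Lam : set X) (k : nat)
    (f : seq X -> \bar R) : \bar R :=
  match k with
  | 0 => f [::]
  | k'.+1 => (\int[nu]_(y in Lam) iint nu Lam k' (fun s => f (y :: s)))%E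
  end.

Definition zcoef (nu : {measure set X -> \bar R}) (Lam : set X)
    (phi : potential) (k : nat) : R :=
  fine (iint nu Lam k (fun x => expeR (- energy phi x))).

Definition zterm (nu : {measure set X -> \bar R}) (Lam : set X)
    (phi : potential) (lam : R[i]) (k : nat) : R[i] :=
  lam ^+ k / (k`!)%:R * (zcoef nu Lam phi k)%:C%C.

(* partition function: the complex series sum_k lam^k/k! int ..., its sum
   being computed through the real and imaginary parts *)
Definition Zpf (nu : {measure set X -> \bar R}) (Lam : set X)
    (phi : potential) (lam : R[i]) : R[i] :=
  Complex (limn (series (fun k => complex.Re (zterm nu Lam phi lam k))))
          (limn (series (fun k => complex.Im (zterm nu Lam phi lam k)))).

Definition kappa1 (nu : {measure set X -> \bar R}) (Lam : set X)
    (phi : potential) (lam : R[i]) (x : X) : R[i] :=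
  lam * Zpf nu Lam (pin phi [:: x]) lam / Zpf nu Lam phi lam.

Definition Dz (dist : X -> X -> R) (z : X) (x : seq X) : R :=
  \sum_(xj <- x) dist z xj.

Definition pin_trunc (dist : X -> X -> R) (z : X) (phi : potential)
    (y : X) (t : \bar R) : potential :=
  fun x => if ((Dz dist z x)%:E < t)%E then pin phi [:: y] x else phi x.

Definition kill (phi : potential) (Delta : set X) : potential :=
  fun x => match x with
           | [:: a] => if pselect (Delta a) then +oo%E else phi x
           | _ => phi x
           end.

Definition closed_under_modification (dist : X -> X -> R) (z : X)
    (Phi : set potential) : Prop :=
  (forall phi, Phi phi -> forall (y : X) (t : \bar R), (0 <= t)%E ->
      Phi (pin_trunc dist z phi y t)) /\
  (forall phi, Phi phi -> forall Delta : set X, measurable Delta ->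
      Phi (kill phi Delta)).

Definition zero_free (nu : {measure set X -> \bar R}) (Lam : set X)
    (Phi : set potential) (lam : R[i]) (delta : R) : Prop :=
  forall phi, Phi phi -> delta%:C%C <= `|Zpf nu Lam phi lam|.

End Defs.

Definition cbounded {R : rcfType} (U : set R[i]) : Prop :=
  exists M : R, forall lam, U lam -> `|lam| <= M%:C%C.

Definition cdisc {R : rcfType} (c : R[i]) (r : R) : set R[i] :=
  [set lam | `|lam - c| < r%:C%C].

Definition unif_equicont {R : rcfType} {I : Type} (P : set I) (W : set R[i])
    (f : I -> R[i] -> R[i]) : Prop :=
  forall e : R, 0 < e -> exists2 eta : R, 0 < eta &
    forall i, P i -> forall a b, W a -> W b -> `|a - b| < eta%:C%C ->
      `|f i a - f i b| < e%:C%C.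

From HB Require Import structures.
From mathcomp Require Import all_boot all_order all_algebra.
From mathcomp Require Import all_classical all_reals all_analysis measurable_realfun.
From mathcomp Require Import fingroup perm complex.
From mathcomp Require Import ring.

Set Implicit Arguments.
Unset Strict Implicit.
Unset Printing Implicit Defensive.

Import Order.TTheory GRing.Theory Num.Theory numFieldNormedType.Exports.
Local Open Scope classical_set_scope.
Local Open Scope ring_scope.

(* For repulsive phi the k-th coefficient of Z(lam) = sum_k lam^k/k! c_k, the
   integral of e^-H over Lam^k, lies in [0, nu(Lam)^k], independently of phi.
   Hence on each disc |lam| <= M all partition functions are bounded by, and
   Lipschitz with, the same constant 2 exp(2 M nu(Lam)), which gives uniform
   equicontinuity.  If moreover |Z(lam0)| >= delta on Phi, the common Lipschitz
   bound keeps |Z| >= delta/2 on a small disc around lam0, and there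
   kappa = lam Z(. | x) / Z is a product and quotient of uniformly bounded,
   uniformly Lipschitz functions with denominators bounded below. *)

Section LipschitzWithin.
Context {K : numFieldType}.
Implicit Types (A : set K) (f g : K -> K).

Definition lipschitz_within A (k : K) f :=
  forall x y, A x -> A y -> `|f x - f y| <= k * `|x - y|.

Lemma lipschitz_withinS A B k f :
  A `<=` B -> lipschitz_within B k f -> lipschitz_within A k f.
Proof. by move=> AB fk x y /AB Ax /AB Ay; exact: fk. Qed.

Lemma lipschitz_within_id A : lipschitz_within A 1 id.
Proof. by move=> x y _ _; rewrite mul1r. Qed.

Lemma lipschitz_withinM A f g (kf kg Bf Bg : K) :
  (forall x, A x -> `|f x| <= Bf) -> (forall x, A x -> `|g x| <= Bg) ->
  lipschitz_within A kf f -> lipschitz_within A kg g ->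
  lipschitz_within A (kf * Bg + Bf * kg) (fun x => f x * g x).
Proof.
move=> fB gB fk gk x y Ax Ay.
have -> : f x * g x - f y * g y = (f x - f y) * g x + f y * (g x - g y).
  by rewrite mulrBl mulrBr addrA subrK.
apply: le_trans (ler_normD _ _) _; rewrite !normrM mulrDl.
apply: lerD.
  by rewrite mulrAC; apply: ler_pM; [| |exact: fk|exact: gB].
by rewrite -mulrA; apply: ler_pM; [| |exact: fB|exact: gk].
Qed.

Lemma lipschitz_withinV A f k (m : K) : 0 < m -> (forall x, A x -> m <= `|f x|) ->
  lipschitz_within A k f -> lipschitz_within A (k / m ^+ 2) (fun x => (f x)^-1).
Proof.
move=> m_gt0 fm fk x y Ax Ay.
have fx_gt0 := lt_le_trans m_gt0 (fm x Ax); have fy_gt0 := lt_le_trans m_gt0 (fm y Ay).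
have fx0 : f x != 0 by rewrite -normr_gt0.
have fy0 : f y != 0 by rewrite -normr_gt0.
have -> : (f x)^-1 - (f y)^-1 = (f y - f x) / (f x * f y).
  by field; rewrite fx0 fy0.
rewrite normrM normrV ?unitfE ?mulf_neq0 // normrM distrC mulrAC.
apply: ler_pM; rewrite ?invr_ge0 ?mulr_ge0 //; first exact: fk.
rewrite lef_pV2 ?posrE ?exprn_gt0 ?mulr_gt0 // expr2.
by apply: ler_pM; [exact: ltW|exact: ltW|exact: fm|exact: fm].
Qed.

Lemma lipschitz_within_norm_ge A f k x0 (m : K) :
  lipschitz_within A k f -> A x0 -> m <= `|f x0| ->
  forall x, A x -> k * `|x - x0| <= m / 2 -> m / 2 <= `|f x|.
Proof.
move=> fk Ax0 fx0 x Ax kx.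
rewrite -(lerD2r (m / 2)) -splitr; apply: (le_trans fx0).
rewrite -[f x0](subrK (f x)) addrC; apply: le_trans (ler_normD _ _) _.
by rewrite lerD2l distrC; exact: le_trans (fk x x0 Ax Ax0) kx.
Qed.

End LipschitzWithin.

Lemma normrXB_le {K : numDomainType} (a b M : K) (k : nat) :
  1 <= M -> `|a| <= M -> `|b| <= M ->
  `|a ^+ k - b ^+ k| <= k%:R * M ^+ k * `|a - b|.
Proof.
move=> M_ge1 aM bM; have M_ge0 : 0 <= M := le_trans ler01 M_ge1.
elim: k => [|k IHk]; first by rewrite !expr0 subrr normr0 !mul0r.
have -> : a ^+ k.+1 - b ^+ k.+1 = a * (a ^+ k - b ^+ k) + (a - b) * b ^+ k.
  by rewrite !exprS; ring.
have -> : k.+1%:R * M ^+ k.+1 * `|a - b| =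
    M * (k%:R * M ^+ k * `|a - b|) + M * M ^+ k * `|a - b|.
  by rewrite exprS; ring.
apply: le_trans (ler_normD _ _) _; rewrite !normrM normrX.
apply: lerD; first exact: ler_pM.
rewrite mulrC ler_wpM2r // -exprS.
apply: le_trans (ler_weXn2l M_ge1 (leqnSn k)).
by apply: lerXn2r; rewrite ?nnegrE.
Qed.

Section ComplexDisc.
Context {R : rcfType}.

Lemma ge0_complexE (z : R[i]) : 0 <= z -> exists2 x : R, 0 <= x & z = x%:C%C.
Proof. by move=> z_ge0; exists (complex.Re z); rewrite -?ler0c RRe_real ?ger0_real. Qed.

Lemma cdisc_sub_ball (lam0 : R[i]) (r M : R) :
  `|lam0| + r%:C%C <= M%:C%C -> cdisc lam0 r `<=` [set lam | `|lam| <= M%:C%C].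
Proof.
move=> lam0rM lam /= /ltW lam_r; apply: le_trans lam0rM.
rewrite -[lam](subrK lam0) addrC; apply: le_trans (ler_normD _ _) _.
by rewrite lerD2l.
Qed.

Lemma lipschitz_unif_equicont {I : Type} (P : set I) (W : set R[i])
    (f : I -> R[i] -> R[i]) (k : R[i]) :
  0 <= k -> (forall i, P i -> lipschitz_within W k (f i)) -> unif_equicont P W f.
Proof.
move=> /ge0_complexE[L L_ge0 ->] fk e e_gt0.
have L1_gt0 : 0 < L + 1 by rewrite ltr_wpDl.
exists (e / (L + 1)); first by rewrite divr_gt0.
move=> i Pi a b Wa Wb ab; apply: le_lt_trans (fk i Pi a b Wa Wb) _.
apply: le_lt_trans (ler_wpM2l _ (ltW ab)) _; first by rewrite ler0c.
by rewrite -rmorphM ltcR mulrCA gtr_pMr // ltr_pdivrMr // mul1r ltrDl.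
Qed.

End ComplexDisc.

Section ComplexSeries.
Context {R : realType}.
Implicit Types (u v : nat -> R[i]) (w : R^nat).

Lemma series_dominated_cvg (u w : R^nat) :
  (forall k, `|u k| <= w k) -> cvgn (series w) -> cvgn (series u).
Proof.
move=> uw cw; apply: (@normed_cvg _ R^o).
exact: series_le_cvg (fun k => normr_ge0 (u k)) (fun k => le_trans _ (uw k)) uw cw.
Qed.

Lemma lim_series_dominated (u w : R^nat) :
  (forall k, `|u k| <= w k) -> cvgn (series w) -> `|limn (series u)| <= limn (series w).
Proof.
move=> uw cw; have cnu : cvgn [normed series u].
  exact: series_le_cvg (fun k => normr_ge0 (u k)) (fun k => le_trans _ (uw k)) uw cw.
by apply: le_trans (@lim_series_norm _ R^o _ cnu) _; exact: lim_series_le.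
Qed.

Lemma normr_real_complex (x : R) : `|x%:C%C| = `|x|%:C%C.
Proof. by rewrite normc_def /= expr0n addr0 sqrtr_sqr. Qed.

Lemma normc_ge_Im (z : R[i]) : `|complex.Im z|%:C%C <= `|z|.
Proof.
rewrite -normrN -ReiNIm; apply: le_trans (normc_ge_Re _) _.
by rewrite normrM complexiE normCi mulr1.
Qed.

Definition csum u : R[i] :=
  Complex (limn (series (fun k => complex.Re (u k))))
          (limn (series (fun k => complex.Im (u k)))).

Section Dominated.
Variables (u v : nat -> R[i]) (w : R^nat).
Hypotheses (uw : forall k, `|u k| <= (w k)%:C%C) (vw : forall k, `|v k| <= (w k)%:C%C).
Hypothesis cw : cvgn (series w).

Lemma Re_dominated z : (forall k, `|z k| <= (w k)%:C%C) ->
  forall k, `|complex.Re (z k)| <= w k.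
Proof. by move=> zw k; rewrite -lecR; exact: le_trans (normc_ge_Re _) (zw k). Qed.

Lemma Im_dominated z : (forall k, `|z k| <= (w k)%:C%C) ->
  forall k, `|complex.Im (z k)| <= w k.
Proof. by move=> zw k; rewrite -lecR; exact: le_trans (normc_ge_Im _) (zw k). Qed.

Lemma csum_norm_le : `|csum u| <= (limn (series w) *+ 2)%:C%C.
Proof.
rewrite [csum u]complexE /= rmorphMn mulr2n.
apply: le_trans (ler_normD _ _) _; rewrite normrM complexiE normCi mul1r.
apply: lerD; rewrite normr_real_complex lecR; apply: lim_series_dominated cw.
  exact: Re_dominated.
exact: Im_dominated.
Qed.

Lemma csumB : csum u - csum v = csum (u - v).
Proof.
rewrite /csum /=; congr Complex; rewrite -lim_seriesB;
  do ?[apply: series_dominated_cvg cw; by [exact: Re_dominated | exact: Im_dominated]];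
  by congr (limn (series _)); apply/funext => k; rewrite !fctE;
     case: (u k) (v k) => ? ? [].
Qed.

End Dominated.
End ComplexSeries.

Section ExpTypeSeries.
Context {R : realType}.
Variables (c : nat -> R) (V M : R).
Hypothesis c_bound : forall k, 0 <= c k <= V ^+ k.
Hypothesis M_ge1 : 1 <= M.

Definition pterm (lam : R[i]) k : R[i] := lam ^+ k / (k`!)%:R * (c k)%:C%C.

Lemma ptermE lam k : pterm lam k = lam ^+ k * (c k / k`!%:R)%:C%C.
Proof. by rewrite /pterm -mulrA rmorphM fmorphV rmorph_nat [_^-1 * _]mulrC. Qed.

Lemma coef_ge0 k : 0 <= c k / k`!%:R.
Proof. by rewrite divr_ge0 //; case/andP: (c_bound k). Qed.

Lemma coef_le_exp_coeff (n : R) k : 0 <= n <= 2 ^+ k ->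
  n * M ^+ k * (c k / k`!%:R) <= exp_coeff (2 * M * V) k.
Proof.
case/andP=> n_ge0 n_le; have M_ge0 : 0 <= M := le_trans ler01 M_ge1.
rewrite /exp_coeff /= !exprMn -!mulrA; apply: ler_pM => //.
  by rewrite mulr_ge0 ?exprn_ge0 ?coef_ge0.
rewrite ler_wpM2l ?exprn_ge0 // ler_wpM2r ?invr_ge0 //.
by case/andP: (c_bound k).
Qed.

Lemma pterm_norm_le lam k :
  `|lam| <= M%:C%C -> `|pterm lam k| <= (exp_coeff (2 * M * V) k)%:C%C.
Proof.
move=> lamM; rewrite ptermE normrM normrX normr_real_complex (ger0_norm (coef_ge0 k)).
apply: le_trans (ler_wpM2r _ (lerXn2r k _ _ lamM)) _; rewrite ?ler0c ?coef_ge0 //.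
  by rewrite nnegrE (le_trans _ lamM).
rewrite -rmorphXn -rmorphM lecR -[X in X <= _]mul1r mulrA; apply: coef_le_exp_coeff.
by rewrite ler01 exprn_ege1 // ler1n.
Qed.

Lemma pterm_lipschitz k : lipschitz_within [set lam | `|lam| <= M%:C%C]
  (exp_coeff (2 * M * V) k)%:C%C (pterm ^~ k).
Proof.
move=> a b /= aM bM.
rewrite !ptermE -mulrBl normrM normr_real_complex (ger0_norm (coef_ge0 k)).
have M_ge1C : 1 <= M%:C%C by rewrite -[1]/(1%:C%C) lecR.
apply: le_trans (ler_wpM2r _ (normrXB_le k M_ge1C aM bM)) _.
  by rewrite ler0c coef_ge0.
rewrite mulrAC ler_wpM2r // -rmorphXn -(rmorph_nat (real_complex R)) -!rmorphM lecR.
apply: coef_le_exp_coeff.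
by rewrite ler0n -natrX ler_nat ltnW // ltn_expl.
Qed.

Lemma csum_pterm_norm_le lam :
  `|lam| <= M%:C%C -> `|csum (pterm lam)| <= (expR (2 * M * V) *+ 2)%:C%C.
Proof.
by move=> lamM; apply: csum_norm_le (is_cvg_series_exp_coeff _) => k; exact: pterm_norm_le.
Qed.

Lemma csum_pterm_lipschitz : lipschitz_within [set lam | `|lam| <= M%:C%C]
  (expR (2 * M * V) *+ 2)%:C%C (fun lam => csum (pterm lam)).
Proof.
move=> a b aM bM; have [n _ abE] := ge0_complexE (normr_ge0 (a - b)).
have cvg_exp := is_cvg_series_exp_coeff (2 * M * V).
rewrite (csumB (w := exp_coeff (2 * M * V))) ?cvg_exp //;
  try by move=> k; exact: pterm_norm_le.
apply: le_trans (csum_norm_le (w := n *: exp_coeff (2 * M * V)) _ _) _.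
- move=> k; rewrite !fctE -[n *: _]/(n * _) rmorphM /= -abE mulrC; exact: pterm_lipschitz.
- exact: is_cvg_seriesZ.
by rewrite lim_seriesZ // abE -rmorphM lecR [X in _ <= X]mulrC -mulrnAr.
Qed.

End ExpTypeSeries.

Section NonnegIntegral.
Context {d : measure_display} {T : measurableType d} {R : realType}.
Variable mu : {measure set T -> \bar R}.

(* The nonnegative integral is a supremum over simple functions below the
   integrand, so it is monotone without any measurability assumption; none is
   available for the iterated integrands of [iint]. *)
Lemma ge0_le_integral_nonmeas (D : set T) (f g : T -> \bar R) :
  (forall x, D x -> (0 <= f x)%E) -> (forall x, D x -> (f x <= g x)%E) ->
  (\int[mu]_(x in D) f x <= \int[mu]_(x in D) g x)%E.
Proof.
move=> f_ge0 fg; have g_ge0 x : D x -> (0 <= g x)%E.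
  by move=> Dx; exact: le_trans (f_ge0 x Dx) (fg x Dx).
rewrite (ge0_integralE _ f_ge0) (ge0_integralE _ g_ge0).
apply: ge_ereal_sup => _ [h hf <-]; apply: ereal_sup_ubound; exists h => //= x.
apply: le_trans (hf x) _; rewrite /patch; case: ifPn => // /[!in_setE] Dx.
exact: fg.
Qed.

End NonnegIntegral.

Section PartitionFunction.
Context {R : realType} {d : measure_display} {X : measurableType d}.
Variables (nu : {measure set X -> \bar R}) (Lam : set X) (V : R).
Hypotheses (mLam : measurable Lam) (nuLam : nu Lam = V%:E).
Implicit Type phi : @potential R d X.

Lemma iint_ge0_le k (f : seq X -> \bar R) : (forall s, 0 <= f s <= 1)%E ->
  (0 <= iint nu Lam k f <= (V ^+ k)%:E)%E.
Proof.
elim: k f => [|k IHk] f f01 /=; first by rewrite expr0.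
apply/andP; split.
  by apply: integral_ge0 => y _; case/andP: (IHk _ (fun s => f01 (y :: s))).
apply: le_trans (ge0_le_integral_nonmeas _ (g := cst (V ^+ k)%:E) _ _) _.
- by move=> y _; case/andP: (IHk _ (fun s => f01 (y :: s))).
- by move=> y _; case/andP: (IHk _ (fun s => f01 (y :: s))).
by rewrite integral_cst // nuLam -EFinM exprSr.
Qed.

Lemma energy_ge0 phi : repulsive phi -> forall s, (0 <= energy phi s)%E.
Proof. by move=> phi_ge0 s; apply: sume_ge0 => S _; exact: phi_ge0. Qed.

Lemma pin_repulsive phi s : repulsive phi -> repulsive (pin phi s).
Proof. by move=> phi_ge0 y; apply: sume_ge0 => S _; exact: phi_ge0. Qed.

Lemma zcoef_bound phi : repulsive phi -> forall k, 0 <= zcoef nu Lam phi k <= V ^+ k.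
Proof.
move=> phi_ge0 k; rewrite /zcoef.
have /iint_ge0_le : forall s, (0 <= expeR (- energy phi s) <= 1)%E.
  by move=> s; rewrite expeR_ge0 -expeR0 lee_expeR oppe_le0 energy_ge0.
move=> /(_ k); case: iint => [r||] //= /andP[r_ge0 rV]; last by rewrite leye_eq in rV.
Qed.

Lemma ZpfE phi lam : Zpf nu Lam phi lam = csum (pterm (zcoef nu Lam phi) lam).
Proof. by []. Qed.

Lemma Zpf_norm_le phi M lam : repulsive phi -> 1 <= M -> `|lam| <= M%:C%C ->
  `|Zpf nu Lam phi lam| <= (expR (2 * M * V) *+ 2)%:C%C.
Proof. by move=> /zcoef_bound c_bound M_ge1; rewrite ZpfE; exact: csum_pterm_norm_le. Qed.

Lemma Zpf_lipschitz phi M : repulsive phi -> 1 <= M ->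
  lipschitz_within [set lam | `|lam| <= M%:C%C] (expR (2 * M * V) *+ 2)%:C%C
    (Zpf nu Lam phi).
Proof. by move=> /zcoef_bound c_bound M_ge1; exact: csum_pterm_lipschitz. Qed.

End PartitionFunction.

Section Equicontinuity.
Context {R : realType} {d : measure_display} {X : measurableType d}.
Variables (nu : {measure set X -> \bar R}) (Lam : set X) (V : R).
Hypotheses (mLam : measurable Lam) (nuLam : nu Lam = V%:E).
Variable Phi : set (@potential R d X).
Hypothesis Phi_rep : forall phi, Phi phi -> repulsive phi.

Lemma Zpf_unif_equicont U : cbounded U -> unif_equicont Phi U (Zpf nu Lam).
Proof.
case=> M0 UM0; pose M : R := `|M0| + 1; have M_ge1 : 1 <= M by rewrite lerDr.
have UM : U `<=` [set lam | `|lam| <= M%:C%C].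
  move=> lam /UM0 /le_trans; apply; rewrite lecR.
  by rewrite /M (le_trans (ler_norm M0)) // lerDl.
apply: (lipschitz_unif_equicont (k := (expR (2 * M * V) *+ 2)%:C%C)).
  by rewrite ler0c mulrn_wge0 // expR_ge0.
move=> phi /Phi_rep phi_rep; apply: lipschitz_withinS UM _.
exact: Zpf_lipschitz.
Qed.

Lemma Zpf_norm_ge_near (lam0 : R[i]) (M delta : R) :
  1 <= M -> `|lam0| + 1 <= M%:C%C -> 0 < delta -> zero_free nu Lam Phi lam0 delta ->
  exists2 r : R, 0 < r & (cdisc lam0 r `<=` [set lam | `|lam| <= M%:C%C]) /\
    forall phi, Phi phi -> forall lam, cdisc lam0 r lam ->
      delta%:C%C / 2 <= `|Zpf nu Lam phi lam|.
Proof.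
move=> M_ge1 lam0M delta_gt0 zf; set L := expR (2 * M * V) *+ 2.
have L_gt0 : 0 < L by rewrite pmulrn_lgt0 // expR_gt0.
pose r := Num.min 1 (delta / (L *+ 2)).
have r_gt0 : 0 < r by rewrite lt_min ltr01 divr_gt0 // pmulrn_lgt0.
have discM : cdisc lam0 r `<=` [set lam | `|lam| <= M%:C%C].
  apply: cdisc_sub_ball; apply: le_trans lam0M; rewrite lerD2l -[1]/(1%:C%C) lecR.
  by rewrite ge_min lexx.
exists r => //; split => // phi Pphi lam lam_r.
apply: (lipschitz_within_norm_ge (A := cdisc lam0 r) _ _ (zf _ Pphi) lam_r).
- exact: lipschitz_withinS discM (Zpf_lipschitz mLam nuLam (Phi_rep Pphi) M_ge1).
- by rewrite /cdisc /= subrr normr0 ltcR.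
apply: le_trans (ler_wpM2l _ (ltW lam_r)) _; first by rewrite ler0c ltW.
rewrite -rmorphM /= -[2 : R[i]](rmorph_nat (real_complex R)) -fmorphV -rmorphM /= lecR.
have -> : delta / 2 = L * (delta / (L *+ 2)).
  by rewrite -[L *+ 2]mulr_natr; field; exact: lt0r_neq0 (expR_gt0 _).
by rewrite -/L ler_wpM2l ?(ltW L_gt0) // ge_min lexx orbT.
Qed.

Lemma kappa1_unif_equicont (W : set R[i]) (M : R) (m : R[i]) :
  1 <= M -> W `<=` [set lam | `|lam| <= M%:C%C] -> 0 < m ->
  (forall phi, Phi phi -> forall lam, W lam -> m <= `|Zpf nu Lam phi lam|) ->
  unif_equicont [set p | Phi p.1 /\ Lam p.2] W (fun p lam => kappa1 nu Lam p.1 lam p.2).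
Proof.
move=> M_ge1 WM m_gt0 Zm; set L := (expR (2 * M * V) *+ 2)%:C%C.
have L_ge0 : 0 <= L by rewrite ler0c mulrn_wge0 // expR_ge0.
have M_ge0 : 0 <= M%:C%C by rewrite ler0c (le_trans ler01).
have Z_le phi : repulsive phi -> forall lam, W lam -> `|Zpf nu Lam phi lam| <= L.
  by move=> phi_rep lam /WM; exact: Zpf_norm_le.
have Z_lip phi : repulsive phi -> lipschitz_within W L (Zpf nu Lam phi).
  by move=> phi_rep; exact: lipschitz_withinS WM (Zpf_lipschitz mLam nuLam phi_rep M_ge1).
apply: (lipschitz_unif_equicont
  (k := (1 * L + M%:C%C * L) * m^-1 + M%:C%C * L * (L / m ^+ 2))).
  by rewrite !(addr_ge0, mulr_ge0, invr_ge0, exprn_ge0) // ltW.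
move=> [phi x] [/= Pphi _]; have phi_rep := Phi_rep Pphi.
have pin_rep := pin_repulsive [:: x] phi_rep.
apply: lipschitz_withinM.
- move=> lam Wlam; rewrite normrM.
  by apply: ler_pM => //; [exact: WM | exact: Z_le].
- move=> lam Wlam; have Zm_lam := Zm _ Pphi _ Wlam.
  by rewrite normfV lef_pV2 ?posrE ?(lt_le_trans m_gt0 Zm_lam).
- apply: lipschitz_withinM; [exact: WM | exact: Z_le | | exact: Z_lip].
  exact: lipschitz_within_id.
- exact: lipschitz_withinV m_gt0 (Zm _ Pphi) (Z_lip _ phi_rep).
Qed.

End Equicontinuity.

Theorem mainTheorem3 (R : realType) (d : measure_display) (X : measurableType d)
  (dist : X -> X -> R) (nu : {measure set X -> \bar R})
  (Hdist : polish_borel dist) (Hnu : locally_finite dist nu)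
  (Phi : set (@potential R d X))
  (HPhi : forall phi, Phi phi -> is_potential phi /\ repulsive phi)
  (U : set R[i]) (HU : cbounded U)
  (Lam : set X) (HLb : mbounded dist Lam) (HLm : measurable Lam) :
  unif_equicont Phi U (fun phi lam => Zpf nu Lam phi lam) /\
  (forall (z : X) (lam0 : R[i]) (delta : R),
     closed_under_modification dist z Phi -> 0 < delta ->
     zero_free nu Lam Phi lam0 delta ->
     exists2 r : R, 0 < r &
       (forall phi, Phi phi -> forall lam, cdisc lam0 r lam ->
          Zpf nu Lam phi lam != 0) /\
       unif_equicont [set p | Phi p.1 /\ Lam p.2] (cdisc lam0 r)
         (fun p lam => kappa1 nu Lam p.1 lam p.2)).
Proof.
have [V nuLam] : exists V, nu Lam = V%:E.
  by exists (fine (nu Lam)); rewrite fineK // ge0_fin_numE ?measure_ge0 ?Hnu.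
have Phi_rep phi : Phi phi -> repulsive phi by case/HPhi.
split; first exact: (Zpf_unif_equicont HLm nuLam Phi_rep HU).
move=> z lam0 delta _ delta_gt0 zf.
have [m0 m0_ge0 lam0E] := ge0_complexE (normr_ge0 lam0).
have M_ge1 : 1 <= m0 + 1 by rewrite lerDr.
have lam0M : `|lam0| + 1 <= (m0 + 1)%:C%C by rewrite lam0E rmorphD.
have [r r_gt0 [discM Zr]] := Zpf_norm_ge_near HLm nuLam Phi_rep M_ge1 lam0M delta_gt0 zf.
have half_gt0 : 0 < delta%:C%C / 2 by rewrite divr_gt0 // ltcR.
exists r => //; split.
  by move=> phi Pphi lam /(Zr _ Pphi) /(lt_le_trans half_gt0); rewrite normr_gt0.
exact: (kappa1_unif_equicont HLm nuLam Phi_rep M_ge1 discM half_gt0 Zr).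
Qed.
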